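(* Let $G$ be a finite simple connected graph with adjacency matrix $A$ having eigenvalues $\mu_1\ge\mu_2\ge\cdots\ge\mu_n$, and suppose $\mu_2(A)>0$. Let $g$ be the multiplicity of the smallest eigenvalue $\mu_n(A)$. Then \[ \chi_q(G)\ \ge\ 1+\min\left\{g,\ \frac{|\mu_n(A)|}{\mu_2(A)}\right\}. \]
   Context: A quantum $c$-coloring of a graph $G=(V,E)$ is a collection of orthogonal projectors $\{P_{v,k}: v\in V, k\in[c]\}$ in $\mathbb{C}^{d\times d}$, for some integer $d>0$, such that $\sum_{k\in[c]}P_{v,k}=I_d$ for every vertex $v\in V$, and $P_{v,k}P_{w,k}=0_d$ for every edge $vw\in E$ and every $k\in[c]$. The quantum chromatic number $\chi_q(G)$ is the smallest $c$ for which $G$ admits a quantum $c$-coloring in some dimension $d>0$. *)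

From HB Require Import structures.
From mathcomp Require Import all_boot all_order all_algebra.
From mathcomp Require Import complex.
From mathcomp Require Import reals.
Set Implicit Arguments. Unset Strict Implicit. Unset Printing Implicit Defensive.
Import Order.TTheory GRing.Theory Num.Theory.
Local Open Scope ring_scope.

Definition simple_graph (n : nat) (e : rel 'I_n) : Prop :=
  symmetric e /\ irreflexive e.

Definition connected_graph (n : nat) (e : rel 'I_n) : Prop :=
  forall x y : 'I_n, connect e x y.

Definition adjmx (R : ringType) (n : nat) (e : rel 'I_n) : 'M[R]_n :=
  \matrix_(i, j) (e i j)%:R.

Definition adjoint (C : numClosedFieldType) (d : nat) (M : 'M[C]_d) : 'M[C]_d :=
  map_mx Num.conj (M^T).

Definition orth_projector (C : numClosedFieldType) (d : nat) (P : 'M[C]_d) :=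
  P *m P = P /\ adjoint P = P.

Definition quantum_coloring (R : rcfType) (n : nat) (e : rel 'I_n) (c d : nat)
    (P : 'I_n -> 'I_c -> 'M[R[i]]_d) : Prop :=
  (forall v k, orth_projector (P v k)) /\
  (forall v, \sum_(k < c) P v k = 1%:M) /\
  (forall v w k, e v w -> P v k *m P w k = 0).

Definition quantum_colorable (R : rcfType) (n : nat) (e : rel 'I_n) (c : nat) : Prop :=
  exists (d : nat) (P : 'I_n -> 'I_c -> 'M[R[i]]_d), (0 < d)%N /\ quantum_coloring e P.

(* s is the list of eigenvalues of the real symmetric matrix A, with
   multiplicity, sorted nonincreasingly: mu_1 >= mu_2 >= ... >= mu_n. *)
Definition sorted_spectrum (R : realType) (n : nat) (A : 'M[R]_n) (s : seq R) : Prop :=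
  sorted (fun x y => y <= x) s /\ char_poly A = \prod_(x <- s) ('X - x%:P).
Arguments quantum_colorable R {n} e c.

(* Write the adjacency matrix as A = V^* diag(lam) V and let P be a quantum
   coloring with c colors in dimension d.  An n x d matrix Y is a vector of
   C^n (x) C^d, here in eigen-coordinates; its color parts are
   Y_k = V P_k V^* Y, where P_k applies P_{v,k} to the row of vertex v.  As
   adjacent vertices get orthogonal projectors, <P_k X, (A (x) 1) P_k X> = 0.
   If c <= g, counting dimensions gives Y <> 0 supported on the
   mu_n-eigenvectors whose color parts all vanish on the (at most one)
   eigenvector with eigenvalue above mu_2.  For the weight w = mu_2 - lam,
   which is nonnegative away from that eigenvector, Cauchy-Schwarz yields
     (mu_2 - mu_n) |Y|^2 = <Y, w Y> <= c sum_k <Y_k, w Y_k>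
                         = c mu_2 sum_k |Y_k|^2 = c mu_2 |Y|^2,
   that is |mu_n| / mu_2 <= c - 1; otherwise c >= g + 1 outright. *)

From HB Require Import structures.
From mathcomp Require Import all_boot all_order all_algebra.
From mathcomp Require Import complex reals ring lra.
Set Implicit Arguments. Unset Strict Implicit. Unset Printing Implicit Defensive.
Import Order.TTheory GRing.Theory Num.Theory.
Local Open Scope ring_scope.
Local Open Scope sesquilinear_scope.

Local Notation "''[' u ]" := (dotmx u u) : ring_scope.

Section DotmxSums.
Variable C : numClosedFieldType.

Lemma dotmx_self d (u : 'rV[C]_d) : '[u] = \sum_b `|u 0 b| ^+ 2.
Proof. by rewrite dotmxE !mxE; apply: eq_bigr => b _; rewrite !mxE normCK. Qed.

Lemma normr_sum_sqr_le c (a : 'I_c -> C) :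
  `|\sum_k a k| ^+ 2 <= c%:R * \sum_k `|a k| ^+ 2.
Proof.
pose u := \row_k a k; pose one : 'rV[C]_c := const_mx 1.
have u_one : dotmx u one = \sum_k a k.
  by rewrite dotmxE mxE; apply: eq_bigr => k _; rewrite !mxE conjC1 mulr1.
have u_norm : '[u] = \sum_k `|a k| ^+ 2.
  by rewrite dotmx_self; apply: eq_bigr => k _; rewrite mxE.
have one_norm : '[one] = c%:R.
  rewrite dotmx_self (eq_bigr (fun=> 1)) ?sumr_const ?card_ord // => k _.
  by rewrite mxE normr1 expr1n.
have [+ _] := CauchySchwarz (@dotmx C c) u one.
by rewrite /= u_one u_norm one_norm mulrC.
Qed.

Lemma dotmx_sum_le c d (u : 'I_c -> 'rV[C]_d) :
  '[\sum_k u k] <= c%:R * \sum_k '[u k].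
Proof.
rewrite dotmx_self (eq_bigr _ (fun k _ => dotmx_self (u k))) exchange_big.
rewrite mulr_sumr; apply: ler_sum => b _.
by rewrite summxE; exact: normr_sum_sqr_le.
Qed.

Lemma dotmx_proj_sum c d (Q : 'I_c -> 'M[C]_d) (u : 'rV[C]_d) :
  (forall k, Q k *m Q k = Q k) -> (forall k, Q k ^t* = Q k) ->
  \sum_k Q k = 1%:M -> \sum_k '[u *m Q k] = '[u].
Proof.
move=> Qidem Qherm Qsum; rewrite [RHS]dotmxE.
rewrite -[X in X *m _](mulmx1 u) -Qsum mulmx_sumr mulmx_suml summxE.
apply: eq_bigr => k _.
by rewrite dotmxE trmx_mul map_mxM Qherm mulmxA -(mulmxA u) Qidem.
Qed.

Lemma dotmx_proj_orth d (Q1 Q2 : 'M[C]_d) (u v : 'rV[C]_d) :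
  Q2 ^t* = Q2 -> Q1 *m Q2 = 0 -> dotmx (u *m Q1) (v *m Q2) = 0.
Proof.
move=> Q2herm Q12.
by rewrite dotmxE trmx_mul map_mxM Q2herm mulmxA -(mulmxA u) Q12 mulmx0 mul0mx mxE.
Qed.

End DotmxSums.

Section QuadraticForm.
Variables (C : numClosedFieldType) (n d : nat).
Implicit Types (A B U : 'M[C]_n) (W : 'M[C]_(n, d)).

Definition qform A W : C := \tr (W ^t* *m A *m W).

Lemma qformE A W : qform A W = \sum_v \sum_w A v w * dotmx (row w W) (row v W).
Proof.
rewrite /qform /mxtrace.
under eq_bigr do rewrite !mxE.
under eq_bigr do under eq_bigr do rewrite !mxE mulr_suml.
under eq_bigr do rewrite exchange_big.
rewrite exchange_big; apply: eq_bigr => v _.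
rewrite exchange_big; apply: eq_bigr => w _.
rewrite dotmxE !mxE mulr_sumr; apply: eq_bigr => b _.
by rewrite !mxE; ring.
Qed.

Lemma qform_diag (l : 'rV[C]_n) W : qform (diag_mx l) W = \sum_j l 0 j * '[row j W].
Proof.
rewrite qformE; apply: eq_bigr => v _.
rewrite (bigD1 v) //= big1 ?addr0 => [|w /negbTE wv]; first by rewrite mxE eqxx mulr1n.
by rewrite mxE eq_sym wv mulr0n mul0r.
Qed.

Lemma qformB A B W : qform (A - B) W = qform A W - qform B W.
Proof. by rewrite /qform mulmxBr mulmxBl raddfB. Qed.

Lemma qform_scalar (a : C) W : qform a%:M W = a * qform 1%:M W.
Proof. by rewrite /qform -[a%:M]scalemx1 -scalemxAr -scalemxAl mxtraceZ. Qed.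

Lemma qform_conj U B W : qform (U ^t* *m B *m U) W = qform B (U *m W).
Proof. by rewrite /qform trmx_mul map_mxM !mulmxA. Qed.

Lemma qform1_unitary U W : U \is unitarymx -> qform 1%:M (U *m W) = qform 1%:M W.
Proof. by move=> Uu; rewrite -qform_conj mulmx1 -invmx_unitary ?mulVmx ?unitarymx_unit. Qed.

Lemma qform1_gt0 W : W != 0 -> 0 < qform 1%:M W.
Proof.
move=> W0; rewrite -diag_const_mx qform_diag.
have [j Wj] : exists j, row j W != 0.
  apply/existsP; apply: contraR W0 => /existsPn Wrows.
  by apply/eqP/row_matrixP => j; rewrite row0; apply/eqP/negPn.
rewrite (bigD1 j) //= mxE mul1r ltr_pwDl ?dotmx_is_dotmx //.
by apply: sumr_ge0 => i _; rewrite mxE mul1r dotmx_self sumr_ge0 // => b _; rewrite exprn_ge0.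
Qed.

Lemma qform_diag_sum_le c (l : 'rV[C]_n) (Y : 'I_c -> 'M[C]_(n, d)) :
  (forall j, 0 <= l 0 j) ->
  qform (diag_mx l) (\sum_k Y k) <= c%:R * \sum_k qform (diag_mx l) (Y k).
Proof.
move=> l_ge0; rewrite qform_diag (eq_bigr _ (fun k _ => qform_diag l (Y k))).
rewrite exchange_big mulr_sumr; apply: ler_sum => j _.
rewrite -mulr_sumr mulrCA ler_wpM2l // raddf_sum.
exact: dotmx_sum_le.
Qed.

End QuadraticForm.

Section RowwiseProjection.
Variables (C : numClosedFieldType) (n d c : nat).

Definition mulmx_rows (Q : 'I_n -> 'M[C]_d) (X : 'M[C]_(n, d)) : 'M[C]_(n, d) :=
  \matrix_v (row v X *m Q v).

Lemma row_mulmx_rows Q X v : row v (mulmx_rows Q X) = row v X *m Q v.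
Proof. exact: rowK. Qed.

Lemma mulmx_rows_is_linear Q : linear (mulmx_rows Q).
Proof.
move=> a X Y; apply/row_matrixP => v.
by rewrite linearP /= !row_mulmx_rows linearP mulmxDl -scalemxAl.
Qed.

HB.instance Definition _ Q :=
  GRing.isLinear.Build C 'M[C]_(n, d) 'M[C]_(n, d) _ (mulmx_rows Q)
    (mulmx_rows_is_linear Q).

Variable P : 'I_n -> 'I_c -> 'M[C]_d.
Hypothesis P_idem : forall v k, P v k *m P v k = P v k.
Hypothesis P_herm : forall v k, P v k ^t* = P v k.
Hypothesis P_sum1 : forall v, \sum_k P v k = 1%:M.

Lemma sum_mulmx_rows X : \sum_k mulmx_rows (P^~ k) X = X.
Proof.
apply/row_matrixP => v; rewrite raddf_sum.
under eq_bigr do rewrite /= row_mulmx_rows.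
by rewrite -mulmx_sumr P_sum1 mulmx1.
Qed.

Lemma qform1_sum_mulmx_rows X : \sum_k qform 1%:M (mulmx_rows (P^~ k) X) = qform 1%:M X.
Proof.
rewrite -diag_const_mx qform_diag.
under eq_bigr do rewrite qform_diag.
rewrite exchange_big; apply: eq_bigr => v _; rewrite -mulr_sumr.
under eq_bigr do rewrite row_mulmx_rows.
by rewrite dotmx_proj_sum.
Qed.

Lemma qform_mulmx_rows_eq0 (A : 'M[C]_n) k X :
  (forall v w, A v w != 0 -> P w k *m P v k = 0) ->
  qform A (mulmx_rows (P^~ k) X) = 0.
Proof.
move=> P_orth; rewrite qformE; apply: big1 => v _; apply: big1 => w _.
have [->|/P_orth Pwv] := eqVneq (A v w) 0; first by rewrite mul0r.
by rewrite !row_mulmx_rows dotmx_proj_orth ?mulr0.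
Qed.

End RowwiseProjection.

Lemma linear_ker_neq0 (F : fieldType) m1 n1 m2 n2
    (f : 'M[F]_(m1, n1) -> 'M[F]_(m2, n2)) :
  linear f -> (m2 * n2 < m1 * n1)%N -> exists2 Z, Z != 0 & f Z = 0.
Proof.
move=> f_lin lt_dim; pose fL : {linear _ -> _} := HB.pack f (GRing.isLinear.Build _ _ _ _ f f_lin).
have : kermx (lin_mx fL) != 0.
  by rewrite kermx_eq0 -row_leq_rank -ltnNge (leq_ltn_trans (rank_leq_col _)).
case/rowV0Pn => u /sub_kermxP uK u0; exists (vec_mx u); first by rewrite vec_mx_eq0.
by rewrite -[f _]/(fL _) -mx_rV_lin uK linear0.
Qed.

Section SpectralBound.
Variables (C : numClosedFieldType) (n d c : nat).
Variables (A V : 'M[C]_n) (lam : 'rV[C]_n) (P : 'I_n -> 'I_c.+1 -> 'M[C]_d).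
Hypothesis V_unitary : V \is unitarymx.
Hypothesis A_spectral : A = V ^t* *m diag_mx lam *m V.
Hypothesis P_idem : forall v k, P v k *m P v k = P v k.
Hypothesis P_herm : forall v k, P v k ^t* = P v k.
Hypothesis P_sum1 : forall v, \sum_k P v k = 1%:M.
Hypothesis P_orth : forall k v w, A v w != 0 -> P w k *m P v k = 0.

Definition color_part k (Y : 'M[C]_(n, d)) : 'M[C]_(n, d) :=
  V *m mulmx_rows (P^~ k) (V ^t* *m Y).

Lemma color_part_is_linear k : linear (color_part k).
Proof. by move=> a Y Z; rewrite /color_part !linearP. Qed.

HB.instance Definition _ k :=
  GRing.isLinear.Build C 'M[C]_(n, d) 'M[C]_(n, d) _ (color_part k)
    (color_part_is_linear k).

Lemma sum_color_part Y : \sum_k color_part k Y = Y.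
Proof.
by rewrite -mulmx_sumr sum_mulmx_rows // mulmxA (unitarymxP V_unitary) mul1mx.
Qed.

Lemma sum_qform_color_part (mu : C) Y :
  \sum_k qform (mu%:M - diag_mx lam) (color_part k Y) = mu * qform 1%:M Y.
Proof.
have VtV : V ^t* \is unitarymx by rewrite trmxC_unitary.
rewrite -(qform1_unitary Y VtV) -(qform1_sum_mulmx_rows P_idem P_herm P_sum1).
rewrite mulr_sumr; apply: eq_bigr => k _.
rewrite qformB qform_scalar qform1_unitary // -qform_conj -A_spectral.
by rewrite (qform_mulmx_rows_eq0 P_herm _ (P_orth k)) subr0.
Qed.

Variables (J S : {set 'I_n}).
Hypothesis S_small : (#|S| <= 1)%N.
Hypothesis SJ_disjoint : [disjoint S & J].

Lemma exists_color_parts_vanishing_on :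
  (0 < d)%N -> (c < #|J|)%N ->
  exists2 Y : 'M[C]_(n, d), Y != 0 &
    (forall j, j \notin J -> row j Y = 0) /\
    (forall k j, j \in S -> row j (color_part k Y) = 0).
Proof.
move=> d_gt0 cJ.
pose E : 'M[C]_(#|J|, n) := rowsub enum_val 1%:M.
have E_retract : rowsub enum_val E^T = 1%:M.
  by apply/matrixP => a b; rewrite !mxE (inj_eq enum_val_inj) eq_sym.
(* Only the first c colors are constrained: the last color part is then
   forced to vanish on S as well, since the parts sum to Y. *)
pose F (Z : 'M[C]_(#|J|, d)) : 'M[C]_(c, d) :=
  \matrix_r \sum_(j in S) row j (color_part (widen_ord (leqnSn c) r) (E^T *m Z)).
have F_lin : linear F.
  move=> a Z1 Z2; apply/row_matrixP => r; rewrite linearP /= !rowK.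
  rewrite scaler_sumr -big_split; apply: eq_bigr => j _.
  by rewrite !linearP.
have dim_lt : (c * d < #|J| * d)%N by rewrite ltn_mul2r d_gt0 cJ.
have [Z Z0 FZ] := linear_ker_neq0 F_lin dim_lt.
exists (E^T *m Z).
  apply: contraNneq Z0 => EZ0; apply/eqP.
  by rewrite -[Z]mul1mx -E_retract mul_rowsub_mx EZ0; apply/matrixP => a b; rewrite !mxE.
set Y := E^T *m Z.
have Y_J : forall j, j \notin J -> row j Y = 0.
  move=> j jJ; apply/rowP => b; rewrite !mxE; apply: big1 => a _; rewrite !mxE.
  have /negbTE -> : enum_val a != j by apply: contraNneq jJ => <-; exact: enum_valP.
  by rewrite mul0r.
have first_parts_S : forall (r : 'I_c) j,
    j \in S -> row j (color_part (widen_ord (leqnSn c) r) Y) = 0.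
  move=> r j jS; have := congr1 (row r) FZ.
  by rewrite rowK row0 (big_pred1 j) // => i; exact: card_le1P S_small j jS i.
split=> // k j jS; have [lt_kc|ge_kc] := ltnP k c.
  have -> : k = widen_ord (leqnSn c) (Ordinal lt_kc) by exact: val_inj.
  exact: first_parts_S.
have -> : k = ord_max by apply/val_inj/eqP; rewrite eqn_leq ge_kc -ltnS ltn_ord.
have := congr1 (row j) (sum_color_part Y).
rewrite Y_J ?(disjointFr SJ_disjoint jS) // big_ord_recr /= raddfD raddf_sum.
by rewrite big1 ?add0r // => r _; exact: first_parts_S.
Qed.

Lemma spectral_coloring_bound (mu2 mun : C) :
  (0 < d)%N -> (c < #|J|)%N ->
  {in J, forall j, lam 0 j = mun} -> {in ~: S, forall j, lam 0 j <= mu2} ->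
  mu2 - mun <= c.+1%:R * mu2.
Proof.
move=> d_gt0 cJ lam_J lam_S.
have [Y Y0 [Y_J Y_S]] := exists_color_parts_vanishing_on d_gt0 cJ.
pose w := \row_j (if j \in S then 0 else mu2 - lam 0 j).
have w_ge0 : forall j, 0 <= w 0 j.
  move=> j; rewrite mxE; case: ifPn => // jS.
  by rewrite subr_ge0 lam_S // inE.
have qY : qform (diag_mx w) Y = (mu2 - mun) * qform 1%:M Y.
  rewrite -diag_const_mx !qform_diag mulr_sumr; apply: eq_bigr => j _.
  rewrite !mxE mul1r; have [jJ|/Y_J->] := boolP (j \in J).
    by rewrite (disjointFl SJ_disjoint jJ) lam_J.
  by rewrite dotmxE mul0mx mxE !mulr0.
have q_part : forall k, qform (diag_mx w) (color_part k Y) =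
                        qform (mu2%:M - diag_mx lam) (color_part k Y).
  move=> k; rewrite -diag_const_mx -linearB !qform_diag; apply: eq_bigr => j _.
  rewrite !mxE; case: ifPn => // /Y_S ->.
  by rewrite dotmxE mul0mx mxE !mulr0.
have := qform_diag_sum_le (color_part^~ Y) w_ge0.
rewrite sum_color_part qY (eq_bigr _ (fun k _ => q_part k)) sum_qform_color_part.
by rewrite mulrA ler_pM2r // qform1_gt0.
Qed.

End SpectralBound.

Section NonincreasingSeq.
Variables (R : realDomainType) (s : seq R).
Hypothesis s_sorted : sorted (fun x y => y <= x) s.

Let ge_trans : transitive (fun x y : R => y <= x).
Proof. by move=> x y z le_xy le_yz; exact: le_trans le_yz le_xy. Qed.

Lemma sorted_ge_nth_le i j : (i <= j < size s)%N -> s`_j <= s`_i.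
Proof.
case/andP=> le_ij lt_js.
exact: sorted_leq_nth ge_trans lexx 0 s s_sorted i j (leq_ltn_trans le_ij lt_js) lt_js le_ij.
Qed.

Lemma sorted_ge_last_le i : (i < size s)%N -> last 0 s <= s`_i.
Proof.
move=> lt_is; have s_gt0 : (0 < size s)%N := leq_ltn_trans (leq0n i) lt_is.
rewrite -nth_last; apply: sorted_ge_nth_le.
by rewrite -ltnS prednK // lt_is leqnn.
Qed.

Lemma sorted_ge_count_gt i : (count (fun x => ~~ (x <= s`_i)%R) s <= i)%N.
Proof.
set p := fun x => _; rewrite -[in X in count p X](cat_take_drop i s) count_cat.
have -> : count p (drop i s) = 0%N.
  apply/eqP; rewrite -leqn0 leqNgt -has_count; apply/hasPn => x /(nthP 0) [k].
  rewrite size_drop ltn_subRL nth_drop => lt_ks <-; rewrite /p negbK.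
  by apply: sorted_ge_nth_le; rewrite leq_addr.
by rewrite addn0 (leq_trans (count_size _ _)) // size_take_min geq_minl.
Qed.

End NonincreasingSeq.

Lemma quantum_colorable_edge_gt1 (R : rcfType) n (e : rel 'I_n) c v w :
  quantum_colorable R e c -> e v w -> (1 < c)%N.
Proof.
case=> [[|d] [P [//= _ [_ [P_sum1 P_col]]]]] evw.
have one_neq0 : (1%:M : 'M[R[i]]_d.+1) != 0 := oner_neq0 _.
case: c P P_sum1 P_col => [|[|c]] // P P_sum1 P_col.
  by have /eqP := one_neq0; rewrite -(P_sum1 v) big_ord0.
have P1 u : P u ord0 = 1%:M by rewrite -(P_sum1 u) big_ord1.
by move: (P_col v w ord0 evw); rewrite !P1 mulmx1 => /eqP; rewrite (negbTE one_neq0).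
Qed.

Lemma eigenvalue_adjmx_edge (F : fieldType) n (e : rel 'I_n) (a : F) :
  eigenvalue (adjmx F e) a -> a != 0 -> exists v w, e v w.
Proof.
case/eigenvalueP => u uA u0 a0.
have [v /existsP[w evw]|no_edge] := pickP (fun v => [exists w, e v w]).
  by exists v, w.
have A0 : adjmx F e = 0.
  apply/matrixP => v w; rewrite !mxE.
  by have /existsPn/(_ w)/negbTE -> := negbT (no_edge v).
by move: uA; rewrite A0 mulmx0 => /esym/eqP; rewrite scaler_eq0 (negbTE a0) (negbTE u0).
Qed.

Lemma sorted_spectrum_eigenvalue (R : realType) n (A : 'M[R]_n) s x :
  sorted_spectrum A s -> x \in s -> eigenvalue A x.
Proof. by move=> [_ cpA] xs; rewrite eigenvalue_root_char cpA root_prod_XsubC. Qed.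

Lemma char_poly_similar (R : comNzRingType) n (N M D : 'M[R]_n) :
  N *m M = 1%:M -> char_poly (N *m D *m M) = char_poly D.
Proof.
move=> NM; pose N' := map_mx polyC N; pose M' := map_mx polyC M.
have NM' : N' *m M' = 1%:M by rewrite -map_mxM NM map_mx1.
rewrite /char_poly; have -> : char_poly_mx (N *m D *m M) = N' *m char_poly_mx D *m M'.
  rewrite /char_poly_mx mulmxBr mulmxBl !map_mxM; congr (_ - _).
  by rewrite scalar_mxC -mulmxA NM' mulmx1.
by rewrite !det_mulmx mulrAC -det_mulmx NM' det1 mul1r.
Qed.

Lemma card_set_perm_eq (T : finType) (U : eqType) (l : T -> U) (t : seq U) (p : pred U) :
  perm_eq t [seq l x | x <- enum T] -> #|[set x | p (l x)]| = count p t.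
Proof. by move=> /permP ->; rewrite count_map cardsE cardE size_filter enumT. Qed.

Section ComplexAdjacency.
Variables (R : realType) (n : nat) (e : rel 'I_n).
Hypothesis e_sym : symmetric e.
Local Notation A := (adjmx R[i] e).
Local Notation V := (spectralmx A).
Local Notation lam := (spectral_diag A).

Lemma adjmx_spectral : A = V ^t* *m diag_mx lam *m V.
Proof.
have A_normal : A \is normalmx.
  have A_herm : A ^t* = A by apply/matrixP => v w; rewrite !mxE e_sym conjC_nat.
  by apply/normalmxP; rewrite A_herm.
by rewrite -invmx_unitary ?spectral_unitarymx //; exact/orthomx_spectralP.
Qed.

Lemma adjmx_spectrum_perm s :
  sorted_spectrum (adjmx R e) s ->
  perm_eq [seq x%:C%C | x <- s] [seq lam 0 j | j <- enum 'I_n].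
Proof.
move=> [_ cpA]; apply: prod_XsubC_eq.
have -> : \prod_(x <- [seq x%:C%C | x <- s]) ('X - x%:P) = char_poly A.
  have -> : A = map_mx (real_complex R) (adjmx R e).
    by apply/matrixP => v w; rewrite !mxE rmorph_nat.
  rewrite -map_char_poly cpA rmorph_prod big_map.
  by apply: eq_bigr => x _; rewrite /= map_polyXsubC.
rewrite {1}adjmx_spectral char_poly_similar; last first.
  by rewrite -invmx_unitary ?spectral_unitarymx // mulVmx ?spectral_unit.
rewrite char_poly_trig ?diag_mx_is_trig // big_map big_enum /=.
by apply: eq_bigr => j _; rewrite mxE eqxx mulr1n.
Qed.

Lemma adjmx_coloring_bound (s : seq R) c d (P : 'I_n -> 'I_c.+1 -> 'M[R[i]]_d) :
  sorted_spectrum (adjmx R e) s -> (1 < size s)%N -> (0 < d)%N ->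
  quantum_coloring e P -> (c < count_mem (last 0%R s) s)%N ->
  s`_1 - last 0 s <= c.+1%:R * s`_1.
Proof.
move=> spec s_gt1 d_gt0 [P_proj [P_sum1 P_col]] c_lt_g.
have perm := adjmx_spectrum_perm spec.
pose J := [set j | lam 0 j == (last 0 s)%:C%C].
(* Written with [~~ (_ <= _)] because the order on R[i] is only partial. *)
pose S := [set j | ~~ (lam 0 j <= (s`_1)%:C%C)].
have J_card : #|J| = count_mem (last 0 s) s.
  transitivity (count (pred1 (last 0 s)%:C%C) [seq x%:C%C | x <- s]).
    exact: card_set_perm_eq perm.
  by rewrite count_map; apply: eq_count => x; rewrite /= (inj_eq (@complexI R)).
have S_small : (#|S| <= 1)%N.
  have -> : #|S| = count (fun x => ~~ (x <= (s`_1)%:C%C)) [seq x%:C%C | x <- s].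
    exact: card_set_perm_eq perm.
  rewrite count_map (eq_count (a2 := fun x => ~~ (x <= s`_1))).
    exact: sorted_ge_count_gt spec.1 1.
  by move=> x /=; rewrite lecR.
have SJ_disjoint : [disjoint S & J].
  rewrite disjoint_subset; apply/subsetP => j; rewrite !inE.
  by apply: contra => /eqP ->; rewrite lecR sorted_ge_last_le ?spec.1.
have P_orth k v w : A v w != 0 -> P w k *m P v k = 0.
  rewrite mxE; have [evw _|_] := boolP (e v w); last by rewrite eqxx.
  by apply: P_col; rewrite e_sym.
have c_lt_J : (c < #|J|)%N by rewrite J_card.
rewrite -lecR rmorphB rmorphM rmorph_nat /=.
apply: (spectral_coloring_bound (spectral_unitarymx A) adjmx_spectral
  (fun v k => (P_proj v k).1) (fun v k => (P_proj v k).2) P_sum1 P_orth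
  S_small SJ_disjoint d_gt0 c_lt_J).
  by move=> j; rewrite inE => /eqP.
by move=> j; rewrite !inE negbK.
Qed.

End ComplexAdjacency.

Lemma normr_ratio_le (R : realFieldType) (mu2 mun : R) (c : nat) :
  0 < mu2 -> mun <= mu2 -> (0 < c)%N -> mu2 - mun <= c.+1%:R * mu2 ->
  `|mun| / mu2 <= c%:R.
Proof.
move=> mu2_gt0 mun_le c_gt0; rewrite -natr1 mulrDl mul1r ler_pdivrMr //.
have c_ge1 : 1 <= c%:R :> R by rewrite ler1n.
have [mun_le0|mun_gt0] := lerP mun 0; first by rewrite ler0_norm //; lra.
by rewrite gtr0_norm //; nra.
Qed.

Theorem theorem3 (R : realType) (n : nat) (e : rel 'I_n) (s : seq R) :
  simple_graph e -> connected_graph e ->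
  sorted_spectrum (adjmx R e) s ->
  0 < s`_1 ->
  forall c : nat, quantum_colorable R e c ->
    1 + Num.min ((count_mem (last 0 s) s)%:R) (`|last 0 s| / s`_1) <= (c%:R : R).
Proof.
move=> [e_sym _] _ spec mu2_gt0 c col.
have s_gt1 : (1 < size s)%N.
  by apply: contraTT mu2_gt0; rewrite -leqNgt => /(nth_default 0) ->; rewrite ltxx.
have [v [w evw]] : exists v w, e v w.
  apply: (@eigenvalue_adjmx_edge _ _ _ s`_1); last by rewrite gt_eqF.
  by apply: sorted_spectrum_eigenvalue spec _; rewrite mem_nth.
have c_gt1 := quantum_colorable_edge_gt1 col evw.
case: c col c_gt1 => [|c] // [d [P [d_gt0 colP]]] c_gt1.
rewrite -[c.+1]add1n natrD lerD2l ge_min.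
have [le_gc|lt_cg] := leqP (count_mem (last 0 s) s) c; first by rewrite ler_nat le_gc.
apply/orP; right; apply: normr_ratio_le => //; first exact: sorted_ge_last_le spec.1 _ s_gt1.
exact: adjmx_coloring_bound colP lt_cg.
Qed.
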